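(* Let $m\ge1$ be an integer, let $\delta>1$ be the positive root of $x^2-(m+1)x-1$, and let $\boldsymbol{\beta}=(\beta_1,\beta_2)$ with $\beta_1=\frac{\delta}{\delta-1}$ and $\beta_2=\delta-1$. Then every rational number in $[0,1)$ has a purely periodic $\boldsymbol{\beta}$-expansion; in particular $\gamma(\boldsymbol{\beta})=1$.
   Context: An alternate base $(\beta_1,\dots,\beta_p)$ ($\beta_i>1$) is identified with the purely periodic sequence $(\beta_k)_{k\ge1}$, $\beta_{k+p}=\beta_k$. For $x\in[0,1)$ the $\boldsymbol{\beta}$-expansion $d_{\boldsymbol{\beta}}(x)=a_1a_2\cdots$ is given by the greedy algorithm $r_0=x$, $a_{k+1}=\lfloor\beta_{k+1}r_k\rfloor$, $r_{k+1}=\beta_{k+1}r_k-a_{k+1}$. The base has Property (PP) if there is $\gamma>0$ such that $d_{\boldsymbol{\beta}}(x)$ is purely periodic for all rational $x\in[0,\gamma)$; $\gamma(\boldsymbol{\beta})$ denotes the supremum of all such $\gamma$ (with $\gamma\le1$). *)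

From Stdlib Require Import Reals Lra ZArith.
Open Scope R_scope.

(* An alternate base is a purely periodic sequence beta : nat -> R, used at
   indices k >= 1 (beta 1, beta 2, ...). The base (b1, b2) of period 2: *)
Definition alt_base2 (b1 b2 : R) : nat -> R :=
  fun k => if Nat.odd k then b1 else b2.

Fixpoint beta_rem (beta : nat -> R) (x : R) (k : nat) : R :=
  match k with
  | O => x
  | S j => beta (S j) * beta_rem beta x j
           - IZR (Int_part (beta (S j) * beta_rem beta x j))
  end.

Definition beta_digit (beta : nat -> R) (x : R) (k : nat) : Z :=
  Int_part (beta k * beta_rem beta x (Nat.pred k)).

Definition purely_periodic_expansion (beta : nat -> R) (x : R) : Prop :=
  exists n : nat, (n >= 1)%nat /\
    forall k : nat, (k >= 1)%nat -> beta_digit beta x (k + n) = beta_digit beta x k.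

Definition is_rational (x : R) : Prop :=
  exists p q : Z, (q > 0)%Z /\ x = IZR p / IZR q.

Definition PP_set (beta : nat -> R) (g : R) : Prop :=
  0 < g <= 1 /\
  forall x, is_rational x -> 0 <= x < g -> purely_periodic_expansion beta x.

Definition gamma_is (beta : nat -> R) (c : R) : Prop :=
  is_lub (PP_set beta) c.

From Stdlib Require Import Reals Lra Lia Psatz ZArith Classical.
Open Scope R_scope.

(* Let delta' = m + 1 - delta = -1/delta be the conjugate of delta.  Two steps of
   the greedy algorithm send z to delta z - a (delta - 1) - b, with digits (a, b)
   equal to (0, 0), (0, 1..m) or (1, 0).  For x = p/q every remainder is
   (U + V delta)/q with (U, V) integral, and its conjugate (U + V delta')/q moves
   by the same affine map with delta' in place of delta.  Both coordinates stay in
   a bounded window, so only finitely many (U, V) occur.  Inside the window the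
   conjugate of the image determines the digits, so the step is injective there,
   and a finite orbit of an injective map is purely periodic. *)

Definition greedy_two_step (b1 b2 r : R) : R := frac_part (b2 * frac_part (b1 * r)).

Lemma greedy_two_step_range b1 b2 r : 0 <= greedy_two_step b1 b2 r < 1.
Proof. unfold greedy_two_step. destruct (base_fp (b2 * frac_part (b1 * r))). lra. Qed.

Lemma beta_rem_alt_base2_double b1 b2 x k :
  beta_rem (alt_base2 b1 b2) x (2 * k) = Nat.iter k (greedy_two_step b1 b2) x.
Proof.
  induction k as [|k IH]; [reflexivity|].
  replace (2 * S k)%nat with (S (S (2 * k))) by lia.
  assert (Hodd : alt_base2 b1 b2 (S (2 * k)) = b1).
  { unfold alt_base2. replace (S (2 * k)) with (1 + 2 * k)%nat by lia.
    rewrite Nat.odd_add_mul_2. reflexivity. }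
  assert (Heven : alt_base2 b1 b2 (S (S (2 * k))) = b2).
  { unfold alt_base2. replace (S (S (2 * k))) with (0 + 2 * S k)%nat by lia.
    rewrite Nat.odd_add_mul_2. reflexivity. }
  rewrite Nat.iter_succ, <- IH. cbn [beta_rem]. rewrite Hodd, Heven. reflexivity.
Qed.

Lemma beta_rem_periodic beta x N :
  (forall k, beta (k + N)%nat = beta k) -> beta_rem beta x N = x ->
  forall k, beta_rem beta x (k + N) = beta_rem beta x k.
Proof.
  intros Hbeta Hx. induction k as [|k IH]; [exact Hx|].
  change (S k + N)%nat with (S (k + N)). cbn [beta_rem]. rewrite IH.
  change (S (k + N)) with (S k + N)%nat. rewrite Hbeta. reflexivity.
Qed.

Lemma purely_periodic_alt_base2 b1 b2 x n : (1 <= n)%nat ->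
  Nat.iter n (greedy_two_step b1 b2) x = x -> purely_periodic_expansion (alt_base2 b1 b2) x.
Proof.
  intros Hn Hx. rewrite <- beta_rem_alt_base2_double in Hx.
  assert (Hbeta : forall k, alt_base2 b1 b2 (k + 2 * n)%nat = alt_base2 b1 b2 k).
  { intro k. unfold alt_base2. rewrite Nat.odd_add_mul_2. reflexivity. }
  exists (2 * n)%nat. split; [lia|]. intros k Hk. unfold beta_digit.
  replace (Nat.pred (k + 2 * n)) with (Nat.pred k + 2 * n)%nat by lia.
  rewrite Hbeta, (beta_rem_periodic _ _ _ Hbeta Hx). reflexivity.
Qed.

Lemma gamma_is_one beta :
  (forall x, is_rational x -> 0 <= x < 1 -> purely_periodic_expansion beta x) ->
  gamma_is beta 1.
Proof.
  intros Hper. split.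
  - intros g [[_ Hg] _]. exact Hg.
  - intros b Hb. apply Hb. split; [lra | exact Hper].
Qed.

Lemma iter_invariant {A} (f : A -> A) (I : A -> Prop) x :
  (forall a, I a -> I (f a)) -> I x -> forall k, I (Nat.iter k f x).
Proof.
  intros Hf Hx k. induction k as [|k IH]; [exact Hx|].
  rewrite Nat.iter_succ. exact (Hf _ IH).
Qed.

Lemma iter_return_of_injective {A} (f : A -> A) (I : A -> Prop) x i n :
  (forall a, I a -> I (f a)) ->
  (forall a b, I a -> I b -> f a = f b -> a = b) -> I x ->
  Nat.iter i f x = Nat.iter (i + n) f x -> Nat.iter n f x = x.
Proof.
  intros Hf Hinj Hx. induction i as [|i IH]; intros Hrep; [symmetry; exact Hrep|].
  apply IH. rewrite Nat.add_succ_l, !Nat.iter_succ in Hrep.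
  exact (Hinj _ _ (iter_invariant f I x Hf Hx i) (iter_invariant f I x Hf Hx (i + n)) Hrep).
Qed.

Lemma nat_pigeonhole N (f : nat -> nat) :
  (forall i, (f i < N)%nat) -> exists i j, (i < j)%nat /\ f i = f j.
Proof.
  revert f. induction N as [|N IH]; intros f Hf; [specialize (Hf 0%nat); lia|].
  destruct (classic (exists i j, (i < j)%nat /\ f i = N /\ f j = N))
    as [(i & j & Hij & Hi & Hj) | Hnot2].
  { exists i, j. split; [exact Hij | congruence]. }
  destruct (classic (exists i, f i = N)) as [[i Hi] | Hnot1].
  - destruct (IH (fun k => f (k + S i)%nat)) as (a & b & Hab & Eab).
    + intro k. assert (f (k + S i)%nat <> N).
      { intro Hk. apply Hnot2. exists i, (k + S i)%nat. repeat split; auto; lia. }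
      specialize (Hf (k + S i)%nat). lia.
    + exists (a + S i)%nat, (b + S i)%nat. split; [lia | exact Eab].
  - apply IH. intro i. specialize (Hf i).
    assert (f i <> N) by (intro; apply Hnot1; exists i; assumption). lia.
Qed.

Lemma Z2_pigeonhole (M : Z) (P : nat -> Z * Z) :
  (forall k, Z.abs (fst (P k)) < M /\ Z.abs (snd (P k)) < M)%Z ->
  exists i j, (i < j)%nat /\ P i = P j.
Proof.
  intros HM.
  set (code k := Z.to_nat ((fst (P k) + M) * (2 * M) + (snd (P k) + M))).
  destruct (nat_pigeonhole (Z.to_nat (4 * M * M)) code) as (i & j & Hij & Eij).
  - intro k. unfold code. destruct (HM k) as [Ha Hb].
    assert (0 <= (fst (P k) + M) * (2 * M) + (snd (P k) + M) < 4 * M * M)%Z by nia.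
    lia.
  - exists i, j. split; [exact Hij|]. unfold code in Eij.
    destruct (HM i) as [Ha Hb], (HM j) as [Hc He].
    destruct (P i) as [a b], (P j) as [c e]; cbn [fst snd] in *.
    apply Z.abs_lt in Ha, Hb, Hc, He.
    apply Z2Nat.inj in Eij; [|nia|nia].
    assert (Hac : ((a - c) * (2 * M) = e - b)%Z) by lia.
    assert (a = c) by (destruct (Z.lt_trichotomy a c) as [|[|]]; nia).
    subst c. f_equal. lia.
Qed.

Lemma Z_eq_of_unit_interval (k l : Z) (w : R) :
  IZR k < w < IZR k + 1 -> IZR l < w < IZR l + 1 -> k = l.
Proof.
  intros Hk Hl.
  assert (k < l + 1)%Z by (apply lt_IZR; rewrite plus_IZR; lra).
  assert (l < k + 1)%Z by (apply lt_IZR; rewrite plus_IZR; lra).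
  lia.
Qed.

Section Window.

Variables (m : nat) (delta : R) (q : Z).
Hypothesis Hm : (1 <= m)%nat.
Hypothesis Hdelta : 1 < delta.
Hypothesis Hquad : delta ^ 2 - (INR m + 1) * delta - 1 = 0.
Hypothesis Hq : (0 < q)%Z.

Definition delta_conj : R := INR m + 1 - delta.

Definition lattice_coord (x : R) (P : Z * Z) : R :=
  (IZR (fst P) + IZR (snd P) * x) / IZR q.

Definition digit_a (z : R) : Z := Int_part (delta / (delta - 1) * z).

Definition digit_b (z : R) : Z :=
  Int_part ((delta - 1) * frac_part (delta / (delta - 1) * z)).

(* The two-step greedy map in the coordinates (U, V) of z = (U + V delta)/q,
   using delta^2 = (m + 1) delta + 1. *)
Definition lattice_step (P : Z * Z) : Z * Z :=
  let a := digit_a (lattice_coord delta P) in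
  let b := digit_b (lattice_coord delta P) in
  (snd P + q * (a - b), fst P + (Z.of_nat m + 1) * snd P - q * a)%Z.

(* Chosen so that the digit (1, 0) maps the conjugate value window_top - delta
   onto window_top. *)
Definition window_top : R := (2 - delta_conj) / (1 - delta_conj).

(* Points able to produce a nonzero digit, z >= -delta_conj, obey the narrower
   conjugate bound. *)
Definition in_window (P : Z * Z) : Prop :=
  let z := lattice_coord delta P in
  let y := lattice_coord delta_conj P in
  0 <= z < 1 /\ window_top - delta - 1 < y < window_top /\
  (- delta_conj <= z -> window_top - delta < y).

Lemma one_le_INR_m : 1 <= INR m.
Proof. exact (le_INR 1 m Hm). Qed.

Lemma delta_bounds : INR m + 1 < delta < INR m + 2 /\ delta_conj * delta = -1 /\
  - 1 / 2 < delta_conj < 0.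
Proof. pose proof one_le_INR_m. unfold delta_conj. repeat split; nra. Qed.

Lemma delta_conj_root : delta_conj ^ 2 - (INR m + 1) * delta_conj - 1 = 0.
Proof. unfold delta_conj. nra. Qed.

Lemma window_top_spec :
  window_top * (1 - delta_conj) = 2 - delta_conj /\ 1 < window_top < 2.
Proof.
  destruct delta_bounds as (_ & _ & Hd).
  unfold window_top. split; [field; lra|].
  split; apply Rmult_lt_reg_r with (1 - delta_conj); try lra;
    unfold Rdiv; rewrite Rmult_assoc, Rinv_l; lra.
Qed.

Lemma lattice_coord_axis x p : lattice_coord x (p, 0%Z) = IZR p / IZR q.
Proof. unfold lattice_coord. cbn [fst snd IZR]. f_equal. ring. Qed.

Lemma lattice_coord_mul x P : lattice_coord x P * IZR q = IZR (fst P) + IZR (snd P) * x.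
Proof. unfold lattice_coord. field. apply not_0_IZR. lia. Qed.

(* Both [delta] and its conjugate are roots of [X^2 - (m+1) X - 1], so the
   integer step acts on either embedding as the same affine map. *)
Lemma lattice_coord_step x P : x ^ 2 - (INR m + 1) * x - 1 = 0 ->
  lattice_coord x (lattice_step P) =
  x * lattice_coord x P - IZR (digit_a (lattice_coord delta P)) * (x - 1)
  - IZR (digit_b (lattice_coord delta P)).
Proof.
  intros Hx. destruct P as [U V]. unfold lattice_step, lattice_coord. cbn [fst snd].
  set (a := digit_a _). set (b := digit_b _). clearbody a b.
  assert (IZR q <> 0) by (apply not_0_IZR; lia).
  repeat rewrite ?plus_IZR, ?minus_IZR, ?mult_IZR. rewrite <- INR_IZR_INZ.
  apply Rminus_diag_uniq.
  transitivity (- IZR V / IZR q * (x ^ 2 - (INR m + 1) * x - 1)); [field; assumption|].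
  rewrite Hx. ring.
Qed.

Lemma greedy_two_step_digits z :
  greedy_two_step (delta / (delta - 1)) (delta - 1) z =
  delta * z - IZR (digit_a z) * (delta - 1) - IZR (digit_b z).
Proof. unfold greedy_two_step, digit_a, digit_b, frac_part. field. lra. Qed.

Lemma lattice_coord_delta_step P :
  lattice_coord delta (lattice_step P) =
  greedy_two_step (delta / (delta - 1)) (delta - 1) (lattice_coord delta P).
Proof. rewrite greedy_two_step_digits. exact (lattice_coord_step delta P Hquad). Qed.

Lemma lattice_coord_delta_iter P k :
  lattice_coord delta (Nat.iter k lattice_step P) =
  Nat.iter k (greedy_two_step (delta / (delta - 1)) (delta - 1)) (lattice_coord delta P).
Proof.
  induction k as [|k IH]; [reflexivity|].
  rewrite !Nat.iter_succ, lattice_coord_delta_step, IH. reflexivity.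
Qed.

Lemma digits_cases z : 0 <= z < 1 ->
  (digit_a z = 0 /\ digit_b z = 0)%Z \/
  ((digit_a z = 0)%Z /\ (1 <= digit_b z <= Z.of_nat m)%Z /\
   - delta_conj <= z /\ delta * z < delta - 1) \/
  ((digit_a z = 1 /\ digit_b z = 0)%Z /\ - delta_conj <= z).
Proof.
  intros [Hz0 Hz1].
  destruct delta_bounds as (Hd & Hdd & Hdc).
  assert (Hr : (delta - 1) * (delta / (delta - 1) * z) = delta * z) by (field; lra).
  unfold digit_b, frac_part. fold (digit_a z).
  destruct (Rlt_le_dec (delta * z) (delta - 1)) as [Hlow | Hhigh].
  - assert (Ha : digit_a z = 0%Z) by (symmetry; apply Int_part_spec; simpl; nra).
    rewrite Ha, Rminus_0_r, Hr.
    destruct (base_Int_part (delta * z)) as [Hb1 Hb2].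
    set (b := Int_part (delta * z)) in *.
    assert (0 <= delta * z) by nra.
    assert (Hb0 : (-1 < b)%Z) by (apply lt_IZR; simpl; lra).
    assert (Hbm : (b < Z.of_nat m + 1)%Z)
      by (apply lt_IZR; rewrite plus_IZR, <- INR_IZR_INZ; lra).
    destruct (Z.eq_dec b 0) as [Hb | Hb]; [left; tauto|].
    assert (1 <= IZR b) by (apply IZR_le; lia).
    right; left. repeat split; first [exact Ha | lia | nra].
  - assert (Ha : digit_a z = 1%Z) by (symmetry; apply Int_part_spec; simpl; nra).
    rewrite Ha. right; right. split; [split; [reflexivity|] | nra].
    symmetry. apply Int_part_spec. simpl. nra.
Qed.

Lemma window_step P : in_window P -> in_window (lattice_step P).
Proof.
  unfold in_window. intros (Hz & Hy & Hupper).
  pose proof (lattice_coord_step delta_conj P delta_conj_root) as Ey'.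
  pose proof (lattice_coord_step delta P Hquad) as Ez'.
  assert (Hz' : 0 <= lattice_coord delta (lattice_step P) < 1).
  { rewrite lattice_coord_delta_step. apply greedy_two_step_range. }
  destruct delta_bounds as (Hd & Hdd & Hdc).
  destruct window_top_spec as [HB HB12].
  assert (Ed : delta_conj = INR m + 1 - delta) by reflexivity.
  set (z := lattice_coord delta P) in *. set (y := lattice_coord delta_conj P) in *.
  set (B := window_top) in *. set (d := delta_conj) in *.
  pose proof one_le_INR_m.
  assert (Hlo : d * B < d * y) by nra.
  destruct (digits_cases z Hz)
    as [[Ha Hb] | [[Ha [[Hb1 Hbm] [Hzd Hlow]]] | [[Ha Hb] Hzd]]];
    rewrite Ey', Ez', Ha in *; clear Ey' Ez'; cbn [IZR] in *.
  - rewrite Hb in *. cbn [IZR] in *.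
    assert (d * y < d * B + 1 - d) by nra.
    repeat split; lra.
  - specialize (Hupper Hzd).
    assert (d * y < d * B + 1) by nra.
    set (b := digit_b z) in *.
    assert (1 <= IZR b <= INR m)
      by (rewrite INR_IZR_INZ; split; apply IZR_le; lia).
    repeat split; try lra.
    intros Hz'd. destruct (Z.eq_dec b (Z.of_nat m)) as [Ebm | Ebm].
    + rewrite Ebm, <- INR_IZR_INZ in Hz'd. lra.
    + assert (IZR b <= INR m - 1)
        by (rewrite INR_IZR_INZ, <- minus_IZR; apply IZR_le; lia).
      lra.
  - specialize (Hupper Hzd). rewrite Hb in *. cbn [IZR] in *.
    assert (d * y < d * B + 1) by nra.
    repeat split; lra.
Qed.

(* The digits of a window point can be read off the conjugate coordinate of its
   image: the three digit cases land in disjoint unit-length slots. *)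
Lemma next_conj_location P : in_window P ->
  let z := lattice_coord delta P in
  let w := lattice_coord delta_conj (lattice_step P) - delta_conj * window_top in
  (digit_a z = 0 /\ digit_b z = 0)%Z /\ 0 < w < 1 - delta_conj \/
  ((digit_a z = 0)%Z /\ 1 <= IZR (digit_b z) /\
   IZR (digit_b z) < 1 - w < IZR (digit_b z) + 1) \/
  (digit_a z = 1 /\ digit_b z = 0)%Z /\ 1 - delta_conj < w < 2 - delta_conj.
Proof.
  intros HP z w. destruct HP as (Hz & Hy & Hupper).
  pose proof (lattice_coord_step delta_conj P delta_conj_root) as Ey'.
  destruct delta_bounds as (Hd & Hdd & Hdc).
  fold z in Ey', Hupper, Hz. unfold w. rewrite Ey'. clear w Ey'.
  set (y := lattice_coord delta_conj P) in *.
  set (B := window_top) in *. set (d := delta_conj) in *.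
  assert (Hlo : d * B < d * y) by nra.
  destruct (digits_cases z Hz)
    as [[Ha Hb] | [[Ha [[Hb1 _] [Hzd _]]] | [[Ha Hb] Hzd]]];
    rewrite Ha; try rewrite Hb; cbn [IZR].
  - assert (d * y < d * B + 1 - d) by nra.
    left. split; [tauto | lra].
  - specialize (Hupper Hzd).
    assert (d * y < d * B + 1) by nra.
    apply IZR_le in Hb1.
    right; left. split; [reflexivity|]. split; [exact Hb1 | split; lra].
  - specialize (Hupper Hzd).
    assert (d * y < d * B + 1) by nra.
    right; right. split; [tauto | lra].
Qed.

Lemma lattice_step_injective P1 P2 : in_window P1 -> in_window P2 ->
  lattice_step P1 = lattice_step P2 -> P1 = P2.
Proof.
  intros H1 H2 Heq.
  pose proof (next_conj_location P1 H1) as L1.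
  pose proof (next_conj_location P2 H2) as L2.
  cbn zeta in L1, L2. rewrite Heq in L1.
  destruct delta_bounds as (_ & _ & Hdc).
  set (w := lattice_coord delta_conj (lattice_step P2) - delta_conj * window_top) in *.
  assert (Hdigits : digit_a (lattice_coord delta P1) = digit_a (lattice_coord delta P2) /\
                    digit_b (lattice_coord delta P1) = digit_b (lattice_coord delta P2)).
  { destruct L1 as [([-> ->] & W1) | [(-> & Hb1 & W1) | ([-> ->] & W1)]];
    destruct L2 as [([-> ->] & W2) | [(-> & Hb2 & W2) | ([-> ->] & W2)]];
    try (split; reflexivity); try lra.
    split; [reflexivity|]. exact (Z_eq_of_unit_interval _ _ (1 - w) W1 W2). }
  destruct Hdigits as [Ha Hb]. unfold lattice_step in Heq. rewrite Ha, Hb in Heq.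
  destruct P1 as [U1 V1], P2 as [U2 V2]. cbn [fst snd] in Heq.
  injection Heq. intros. f_equal; nia.
Qed.

Lemma window_bounded : exists M : Z,
  forall P, in_window P -> (Z.abs (fst P) < M /\ Z.abs (snd P) < M)%Z.
Proof.
  destruct delta_bounds as (Hd & Hdd & Hdc).
  destruct window_top_spec as [_ HB].
  set (Q := IZR q). assert (HQ : 0 < Q) by (apply IZR_lt; exact Hq).
  set (C := Q * (delta + 1) ^ 2).
  exists (up C). intros [U V] (Hz & Hy & _).
  pose proof (lattice_coord_mul delta (U, V)) as Es.
  pose proof (lattice_coord_mul delta_conj (U, V)) as Et.
  cbn [fst snd] in *. fold Q in Es, Et.
  assert (HV : - (2 * Q) < IZR V * (delta - delta_conj) < (delta + 1) * Q) by nra.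
  assert (HVb : Rabs (IZR V) < (delta + 1) * Q)
    by (apply Rabs_def1; destruct (Rle_lt_dec 0 (IZR V)); nra).
  assert (HUb : Rabs (IZR U) < Q + (delta + 1) * Q * delta).
  { apply Rabs_def1; apply Rabs_def2 in HVb; nra. }
  assert (HC1 : (delta + 1) * Q <= C) by (unfold C; nra).
  assert (HC2 : Q + (delta + 1) * Q * delta <= C) by (unfold C; nra).
  destruct (archimed C) as [HC _].
  split; apply lt_IZR; rewrite abs_IZR; lra.
Qed.

Lemma window_orbit_returns P : in_window P ->
  exists n, (1 <= n)%nat /\ Nat.iter n lattice_step P = P.
Proof.
  intros HP. destruct window_bounded as [M HM].
  pose proof (iter_invariant lattice_step in_window P window_step HP) as Horbit.
  destruct (Z2_pigeonhole M (fun k => Nat.iter k lattice_step P)) as (i & j & Hij & Eij).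
  { intro k. exact (HM _ (Horbit k)). }
  exists (j - i)%nat. split; [lia|].
  apply (iter_return_of_injective lattice_step in_window P i (j - i)
           window_step lattice_step_injective HP).
  replace (i + (j - i))%nat with j by lia. exact Eij.
Qed.

Lemma window_contains_axis p : 0 <= IZR p / IZR q < 1 -> in_window (p, 0%Z).
Proof.
  intros Hx. pose proof one_le_INR_m.
  destruct delta_bounds as (Hd & _ & _). destruct window_top_spec as [_ HB].
  unfold in_window. rewrite !lattice_coord_axis. repeat split; lra.
Qed.

End Window.

Theorem mainTheorem10 (m : nat) (delta : R) :
  (m >= 1)%nat ->
  delta > 1 ->
  delta ^ 2 - (INR m + 1) * delta - 1 = 0 ->
  let beta := alt_base2 (delta / (delta - 1)) (delta - 1) in
  (forall x : R, is_rational x -> 0 <= x < 1 -> purely_periodic_expansion beta x)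
  /\ gamma_is beta 1.
Proof.
  intros Hm Hdelta Hquad beta.
  assert (Hper : forall x, is_rational x -> 0 <= x < 1 -> purely_periodic_expansion beta x).
  { intros x (p & q & Hq & ->) Hx.
    assert (Hq' : (0 < q)%Z) by lia.
    destruct (window_orbit_returns m delta q Hm Hdelta Hquad Hq' (p, 0%Z))
      as (n & Hn & Hreturn).
    { exact (window_contains_axis m delta q Hm Hdelta Hquad p Hx). }
    apply (purely_periodic_alt_base2 _ _ _ n Hn).
    rewrite <- (lattice_coord_axis q delta p).
    rewrite <- (lattice_coord_delta_iter m delta q Hm Hdelta Hquad Hq'), Hreturn.
    reflexivity. }
  split; [exact Hper | exact (gamma_is_one beta Hper)].
Qed.
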